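(* Let $(\mathfrak{h},[\,,\,],* )$ be a right Post-Lie algebra, let $(A_+,\cdot)$ be a non-unital associative algebra with a linear map $\rhd:A_+\otimes A_+\to A_+$, and let $\phi:\mathfrak{h}\to A_+$ be linear with $\phi([x,y])=\phi(x)\phi(y)-\phi(y)\phi(x)$ and $\phi(x*y)=\phi(x)\rhd\phi(y)$ for all $x,y\in\mathfrak{h}$. Let $A=\mathbb{K}1\oplus A_+$ be the unitization and extend $\rhd$ bilinearly to $A$ by $1\rhd x=0$, $x\rhd 1=x$ for $x\in A_+$, and $1\rhd 1=1$. Assume that for all $x,y$ in the subalgebra $\langle\mathrm{im}(\phi)\rangle$ of $A$ generated by $\mathrm{im}(\phi)$ and all $z\in\mathrm{im}(\phi)$: $(x\cdot y)\rhd z=(x\rhd z)\cdot y+x\cdot(y\rhd z)$ and $x\rhd(y\cdot z)=(x\rhd y)\rhd z-x\rhd(y\rhd z)$. Then there exists a unique algebra morphism $\Phi:\mathcal{U}(\mathfrak{h})\to A$ with $\Phi|_{\mathfrak{h}}=\phi$, and it satisfies for all $f,g,h\in\mathcal{U}(\mathfrak{h})$: $\Phi(f*g)=\Phi(f)\rhd\Phi(g)$; $(\Phi(f)\cdot\Phi(g))\rhd\Phi(h)=(\Phi(f)\rhd\Phi(h^{(1)}))\cdot(\Phi(g)\rhd\Phi(h^{(2)}))$; $(\Phi(f)\rhd\Phi(g))\rhd\Phi(h)=\Phi(f)\rhd\big((\Phi(g)\rhd\Phi(h^{(1)}))\cdot\Phi(h^{(2)})\big)$, where $*$ on $\mathcal{U}(\mathfrak{h})$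 is the extension described below.
   Context: A right Post-Lie algebra is a Lie algebra $(\mathfrak{h},[\,,\,])$ with bilinear $*$ such that $x*[y,z]=a_*(x,y,z)-a_*(x,z,y)$ and $[x,y]*z=[x*z,y]+[x,y*z]$, where $a_*(x,y,z)=(x*y)*z-x*(y*z)$. $\mathcal{U}(\mathfrak{h})$ is the enveloping algebra with coproduct $\Delta$ (elements of $\mathfrak{h}$ primitive), Sweedler notation $\Delta(h)=h^{(1)}\otimes h^{(2)}$. Extension (known fact): $*$ extends uniquely to $\mathcal{U}(\mathfrak{h})\otimes\mathcal{U}(\mathfrak{h})\to\mathcal{U}(\mathfrak{h})$ such that for all $f,g,h\in\mathcal{U}(\mathfrak{h})$, $y\in\mathfrak{h}$: $\varepsilon(f*g)=\varepsilon(f)\varepsilon(g)$; $\Delta(f*g)=\Delta(f)*\Delta(g)$; $f*1=f$; $1*f=\varepsilon(f)1$; $f*(gy)=(f*g)*y-f*(g*y)$; $(fg)*h=(f*h^{(1)})(g*h^{(2)})$; $(f*g)*h=f*\big((g*h^{(1)})h^{(2)}\big)$. *)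

From HB Require Import structures.
From mathcomp Require Import all_boot all_algebra.

Set Implicit Arguments.
Unset Strict Implicit.
Unset Printing Implicit Defensive.

Import GRing.Theory.
Local Open Scope ring_scope.

Section Unitization.
Variable K : fieldType.
Variable V : lmodType K.

Definition bilinear_op (U W : lmodType K) (b : U -> U -> W) : Prop :=
  (forall (a : K) x y z, b (a *: x + y) z = a *: b x z + b y z) /\
  (forall (a : K) x y z, b z (a *: x + y) = a *: b z x + b z y).

Definition nonunital_assoc (m : V -> V -> V) : Prop :=
  bilinear_op m /\ (forall x y z, m (m x y) z = m x (m y z)).

Variable m : V -> V -> V.
Hypothesis Hm : nonunital_assoc m.

Lemma mDl x y z : m (x + y) z = m x z + m y z.
Proof. by move: Hm; rewrite /nonunital_assoc /bilinear_op => -[[H _] _]; rewrite -[x]scale1r H !scale1r. Qed.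
Lemma mDr x y z : m z (x + y) = m z x + m z y.
Proof. by move: Hm; rewrite /nonunital_assoc /bilinear_op => -[[_ H] _]; rewrite -[x]scale1r H !scale1r. Qed.
Lemma m0l z : m 0 z = 0.
Proof. have H := @mDl 0 0 z; rewrite addr0 in H. by apply: (addrI (m 0 z)); rewrite -H addr0. Qed.
Lemma m0r z : m z 0 = 0.
Proof. have H := @mDr 0 0 z; rewrite addr0 in H. by apply: (addrI (m z 0)); rewrite -H addr0. Qed.
Lemma mZl (a : K) x z : m (a *: x) z = a *: m x z.
Proof. by move: Hm; rewrite /nonunital_assoc /bilinear_op => -[[H _] _]; rewrite -[a *: x]addr0 H m0l addr0. Qed.
Lemma mZr (a : K) x z : m z (a *: x) = a *: m z x.
Proof. by move: Hm; rewrite /nonunital_assoc /bilinear_op => -[[_ H] _]; rewrite -[a *: x]addr0 H m0r addr0. Qed.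
Lemma mA x y z : m (m x y) z = m x (m y z).
Proof. by move: Hm; rewrite /nonunital_assoc => -[]. Qed.

Definition unitization of nonunital_assoc m : Type := (K^o * V)%type.

HB.instance Definition _ := GRing.Lmodule.on (unitization Hm).

Definition unit_one : unitization Hm := (1 : K^o, 0).
Definition unit_mul (u v : unitization Hm) : unitization Hm :=
  ((u.1 * v.1 : K^o), u.1 *: v.2 + v.1 *: u.2 + m u.2 v.2).

Lemma unit_mulA : associative unit_mul.
Proof.
move=> [a x] [b y] [c z]; rewrite /unit_mul /=; congr pair; first by rewrite mulrA.
rewrite !mDl !mDr !mZl !mZr mA !scalerDr !scalerA -!addrA [c * a]mulrC [c * b]mulrC.
congr (_ + _); congr (_ + _).
rewrite (addrCA (a *: m y z)); congr (_ + _).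
rewrite [RHS](addrCA (c *: m x y)); congr (_ + _).
by rewrite (addrCA (b *: m x z)).
Qed.

Lemma unit_mul1r : left_id unit_one unit_mul.
Proof.
move=> [b y]; rewrite /unit_mul /unit_one /=.
by rewrite mul1r scale1r scaler0 m0l !addr0.
Qed.

Lemma unit_mulr1 : right_id unit_one unit_mul.
Proof.
move=> [a x]; rewrite /unit_mul /unit_one /=.
by rewrite mulr1 scale1r scaler0 m0r add0r addr0.
Qed.

Lemma unit_mulrDl : left_distributive unit_mul +%R.
Proof.
move=> [a x] [b y] [c z]; rewrite /unit_mul /=; congr pair; first by rewrite mulrDl.
rewrite scalerDl scalerDr mDl.
by rewrite [RHS]addrACA [X in X + _ = _]addrACA.
Qed.

Lemma unit_mulrDr : right_distributive unit_mul +%R.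
Proof.
move=> [a x] [b y] [c z]; rewrite /unit_mul /=; congr pair; first by rewrite mulrDr.
rewrite scalerDl scalerDr mDr.
by rewrite [RHS]addrACA [X in X + _ = _]addrACA.
Qed.

Lemma unit_oner_neq0 : unit_one != 0.
Proof. by apply/eqP; case=> /eqP; rewrite oner_eq0. Qed.

HB.instance Definition _ := GRing.Zmodule_isNzRing.Build (unitization Hm)
  unit_mulA unit_mul1r unit_mulr1 unit_mulrDl unit_mulrDr unit_oner_neq0.

Lemma unit_scalerAl (k : K) (u v : unitization Hm) : k *: (u * v) = (k *: u) * v.
Proof.
case: u v => [a x] [b y]; rewrite /GRing.mul /= /unit_mul /=; congr pair; first exact: scalerAl.
by rewrite !scalerDr !scalerA mZl [k * b]mulrC.
Qed.

HB.instance Definition _ := GRing.Lmodule_isLalgebra.Build K (unitization Hm) unit_scalerAl.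

Lemma unit_scalerAr (k : K) (u v : unitization Hm) : k *: (u * v) = u * (k *: v).
Proof.
case: u v => [a x] [b y]; rewrite /GRing.mul /= /unit_mul /=; congr pair; first exact: scalerAr.
rewrite /= -[k *: b]/(k * b).
by rewrite !scalerDr !scalerA mZr [k * b]mulrC [a * k]mulrC.
Qed.

HB.instance Definition _ := GRing.Lalgebra_isAlgebra.Build K (unitization Hm) unit_scalerAr.

End Unitization.




Section PostLie.
Variable K : fieldType.

Definition linear_map (U W : lmodType K) (f : U -> W) : Prop :=
  forall (a : K) u v, f (a *: u + v) = a *: f u + f v.

Definition lie_bracket (L : lmodType K) (br : L -> L -> L) : Prop :=
  [/\ bilinear_op br, (forall x, br x x = 0) &
      (forall x y z, br x (br y z) + br y (br z x) + br z (br x y) = 0)].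

Definition assoc_st (L : lmodType K) (st : L -> L -> L) (x y z : L) : L :=
  st (st x y) z - st x (st y z).

Definition right_postLie (L : lmodType K) (br st : L -> L -> L) : Prop :=
  [/\ lie_bracket br, bilinear_op st,
      (forall x y z, st x (br y z) = assoc_st st x y z - assoc_st st x z y) &
      (forall x y z, st (br x y) z = br (st x z) y + br x (st y z))].

Definition alg_morph (U B : algType K) (F : U -> B) : Prop :=
  [/\ linear_map F, F 1 = 1 & forall u v, F (u * v) = F u * F v].

Definition lie_morph (L : lmodType K) (br : L -> L -> L) (B : algType K)
  (f : L -> B) : Prop :=
  linear_map f /\ (forall x y, f (br x y) = f x * f y - f y * f x).

(* Sweedler sums: an element of U (x) U is represented by a finite list of
   pairs [p_i] standing for sum_i p_i.1 (x) p_i.2; a bilinear map b is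
   applied to it via its linearization. *)
Definition sweedler (U : Type) (W : nmodType) (D : U -> seq (U * U))
  (b : U -> U -> W) (u : U) : W :=
  \sum_(p <- D u) b p.1 p.2.

(* The universal enveloping algebra U(L) of the Lie algebra (L, [,]),
   characterized by its universal property, together with its counit,
   its coproduct (the tensor-level identities being stated through the
   universal property of the tensor product, i.e. tested against all
   bilinear maps), and the extension of the post-Lie product * to U(L)
   as in the "known fact" of the paper. *)
Record enveloping (L : lmodType K) (br st : L -> L -> L) := Enveloping {
  env_U : algType K;
  env_i : L -> env_U;
  env_i_lie : lie_morph br env_i;
  env_univ : forall (B : algType K) (f : L -> B), lie_morph br f ->
    exists F : env_U -> B,
      [/\ alg_morph F, (forall x, F (env_i x) = f x) &
          forall G : env_U -> B, alg_morph G -> (forall x, G (env_i x) = f x) ->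
            forall u, G u = F u];
  env_eps : env_U -> K^o;
  env_eps_morph : alg_morph env_eps;
  env_eps_i : forall x, env_eps (env_i x) = 0;
  env_D : env_U -> seq (env_U * env_U);
  env_D_lin : forall (W : lmodType K) (b : env_U -> env_U -> W), bilinear_op b ->
    linear_map (sweedler env_D b);
  env_D_one : forall (W : lmodType K) (b : env_U -> env_U -> W), bilinear_op b ->
    sweedler env_D b 1 = b 1 1;
  env_D_i : forall (W : lmodType K) (b : env_U -> env_U -> W) x, bilinear_op b ->
    sweedler env_D b (env_i x) = b (env_i x) 1 + b 1 (env_i x);
  env_D_mul : forall (W : lmodType K) (b : env_U -> env_U -> W) u v, bilinear_op b ->
    sweedler env_D b (u * v) =
      \sum_(p <- env_D u) \sum_(q <- env_D v) b (p.1 * q.1) (p.2 * q.2);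
  env_star : env_U -> env_U -> env_U;
  env_star_bilin : bilinear_op env_star;
  env_star_ext : forall x y, env_star (env_i x) (env_i y) = env_i (st x y);
  env_star_eps : forall f g, env_eps (env_star f g) = env_eps f * env_eps g;
  env_star_D : forall (W : lmodType K) (b : env_U -> env_U -> W) f g, bilinear_op b ->
    sweedler env_D b (env_star f g) =
      \sum_(p <- env_D f) \sum_(q <- env_D g) b (env_star p.1 q.1) (env_star p.2 q.2);
  env_star_1r : forall f, env_star f 1 = f;
  env_star_1l : forall f, env_star 1 f = env_eps f *: 1;
  env_star_mulr : forall f g y,
    env_star f (g * env_i y) = env_star (env_star f g) (env_i y) - env_star f (env_star g (env_i y));
  env_star_mull : forall f g h,
    env_star (f * g) h = sweedler env_D (fun a b => env_star f a * env_star g b) h;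
  env_star_assoc : forall f g h,
    env_star (env_star f g) h = env_star f (sweedler env_D (fun a b => env_star g a * b) h)
}.

Inductive gen_subalg (B : algType K) (S : B -> Prop) : B -> Prop :=
  | gen_in x : S x -> gen_subalg S x
  | gen_one : gen_subalg S 1
  | gen_add x y : gen_subalg S x -> gen_subalg S y -> gen_subalg S (x + y)
  | gen_scale (a : K) x : gen_subalg S x -> gen_subalg S (a *: x)
  | gen_mul x y : gen_subalg S x -> gen_subalg S y -> gen_subalg S (x * y).

End PostLie.

Section UnitTri.
Variables (K : fieldType) (V : lmodType K) (m : V -> V -> V) (Hm : nonunital_assoc m).

Definition unit_incl (v : V) : unitization Hm := (0 : K^o, v).

(* bilinear extension of |> to A:  1|>1 = 1, 1|>x = 0, x|>1 = x, i.e.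
   (a1 + x) |> (b1 + y) = ab 1 + (b x + x |> y) *)
Definition unit_tri (tr : V -> V -> V) (u v : unitization Hm) : unitization Hm :=
  ((u.1 * v.1 : K^o), v.1 *: u.2 + tr u.2 v.2).
End UnitTri.

Arguments unit_tri {K V m} Hm tr u v.
Arguments env_U {K L br st} e.
Arguments env_i {K L br st} e _.
Arguments env_eps {K L br st} e _.
Arguments env_D {K L br st} e _.
Arguments env_star {K L br st} e _ _.

(* Phi is the morphism given by the universal property of U(h) applied to the
   Lie morphism x |-> phi x into the commutator algebra of A.  The identity
   Phi (f * g) = Phi f |> Phi g is proved first for g in h, by induction on
   f, using (f g) * y = (f * y) g + f (g * y) and the first hypothesis on |>.
   For general g one inducts on the length filtration of U(h): by
   f * (g y) = (f * g) * y - f * (g * y) and the second hypothesis on |>, the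
   identity for g y follows from the identities for g and for g * y, and
   g * y has the same length as g.  The two remaining identities are then the
   images under Phi of the corresponding identities in U(h). *)

From HB Require Import structures.
From mathcomp Require Import all_boot all_algebra.
From mathcomp Require Import boolp.
Import GRing.Theory.
Local Open Scope ring_scope.
Set Implicit Arguments.
Unset Strict Implicit.

Section Linearity.
Variable K : fieldType.

Section LinearMap.
Variables (U W : lmodType K) (F : U -> W).
Hypothesis HF : linear_map F.

Lemma linear_mapD x y : F (x + y) = F x + F y.
Proof. by rewrite -[x]scale1r HF !scale1r. Qed.

Lemma linear_map0 : F 0 = 0.
Proof. by apply: (addrI (F 0)); rewrite -linear_mapD !addr0. Qed.

Lemma linear_mapZ a x : F (a *: x) = a *: F x.
Proof. by rewrite -[a *: x]addr0 HF linear_map0 addr0. Qed.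

Lemma linear_mapB x y : F (x - y) = F x - F y.
Proof. by rewrite linear_mapD -scaleN1r linear_mapZ scaleN1r. Qed.

Lemma linear_map_sum (I : Type) (s : seq I) (G : I -> U) :
  F (\sum_(p <- s) G p) = \sum_(p <- s) F (G p).
Proof.
elim: s => [|a s IH]; first by rewrite !big_nil linear_map0.
by rewrite !big_cons linear_mapD IH.
Qed.

End LinearMap.

Section Bilinear.
Variables (U W : lmodType K) (b : U -> U -> W).
Hypothesis Hb : bilinear_op b.

Lemma bilinear_linearl z : linear_map (b^~ z).
Proof. by case: Hb => H _ a x y; rewrite H. Qed.

Lemma bilinear_linearr x : linear_map (b x).
Proof. by case: Hb => _ H a y z; rewrite H. Qed.

Lemma bilinearDl x y z : b (x + y) z = b x z + b y z.
Proof. exact: linear_mapD (bilinear_linearl z) x y. Qed.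

Lemma bilinearDr x y z : b x (y + z) = b x y + b x z.
Proof. exact: linear_mapD (bilinear_linearr x) y z. Qed.

Lemma bilinear0l z : b 0 z = 0.
Proof. exact: linear_map0 (bilinear_linearl z). Qed.

Lemma bilinear0r x : b x 0 = 0.
Proof. exact: linear_map0 (bilinear_linearr x). Qed.

Lemma bilinearZl a x z : b (a *: x) z = a *: b x z.
Proof. exact: linear_mapZ (bilinear_linearl z) a x. Qed.

Lemma bilinearZr a x z : b x (a *: z) = a *: b x z.
Proof. exact: linear_mapZ (bilinear_linearr x) a z. Qed.

End Bilinear.

Lemma bilinear_mul (U : lmodType K) (B : algType K) (F G : U -> B) :
  linear_map F -> linear_map G -> bilinear_op (fun a c => F a * G c).
Proof.
move=> HF HG; split=> a x y z.
- by rewrite HF mulrDl -scalerAl.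
- by rewrite HG mulrDr -scalerAr.
Qed.

Lemma gen_subalg_morph (B C : algType K) (S : B -> Prop) (T : C -> Prop)
    (F : B -> C) u :
  alg_morph F -> (forall x, S x -> T (F x)) ->
  gen_subalg S u -> gen_subalg T (F u).
Proof.
case=> HF F1 FM ST; elim=> {u} [x /ST| |x y _ IHx _ IHy|a x _ IHx|x y _ IHx _ IHy].
- exact: gen_in.
- by rewrite F1; apply: gen_one.
- by rewrite linear_mapD //; apply: gen_add.
- by rewrite linear_mapZ //; apply: gen_scale.
- by rewrite FM; apply: gen_mul.
Qed.

End Linearity.

Section Enveloping.
Variables (K : fieldType) (L : lmodType K) (br st : L -> L -> L).
Variable E : enveloping br st.

Local Notation U := (env_U E).
Local Notation i := (env_i E).
Local Notation star := (env_star E).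

Definition env_gens (u : U) : Prop := exists x, u = i x.

Definition env_gen_pred : pred U := fun u => `[< gen_subalg env_gens u >].

Lemma env_gen_pred_closed : GRing.subsemialg_closed env_gen_pred.
Proof.
split.
- by apply/asboolP; apply: gen_one.
- split; first by apply/asboolP; rewrite -(scale0r 1); apply/gen_scale/gen_one.
  by move=> u v /asboolP Hu /asboolP Hv; apply/asboolP; apply: gen_add.
- by move=> a u /asboolP Hu; apply/asboolP; apply: gen_scale.
- by move=> u v /asboolP Hu /asboolP Hv; apply/asboolP; apply: gen_mul.
Qed.

Record env_gen_subalg := EnvGenSubalg {env_gen_val : U; _ : env_gen_pred env_gen_val}.
HB.instance Definition _ := [isSub for env_gen_val].
HB.instance Definition _ := [Equality of env_gen_subalg by <:].
HB.instance Definition _ := [Choice of env_gen_subalg by <:].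
HB.instance Definition _ := GRing.SubChoice_isSubAlgebra.Build K U env_gen_pred
  env_gen_subalg env_gen_pred_closed.

(* The corestriction of i to the generated subalgebra extends, by the
   universal property, to a section of its inclusion into U(h). *)
Lemma env_gen u : gen_subalg env_gens u.
Proof.
pose i' x : env_gen_subalg :=
  EnvGenSubalg (introT (asboolP _) (gen_in (ex_intro _ x erefl))).
have i'_lie : lie_morph br i'.
  case: (env_i_lie E) => Hl Hbr; split.
  - by move=> a x y; apply: val_inj; rewrite /= Hl.
  - by move=> x y; apply: val_inj; rewrite /= Hbr.
have [F [[FL F1 FM] Fi _]] := env_univ E i'_lie.
have [Id [_ _ Id_uniq]] := env_univ E (env_i_lie E).
have valF_morph : alg_morph (fun u => val (F u)).
  by split=> [a x y| |x y]; rewrite ?FL ?F1 ?FM.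
have id_morph : alg_morph (@id U).
  by split=> [a x y| |x y].
have -> : u = val (F u).
  rewrite [LHS](Id_uniq _ id_morph (fun=> erefl)).
  by rewrite (Id_uniq _ valF_morph (fun x => congr1 val (Fi x))).
exact/asboolP/(valP (F u)).
Qed.

(* The length filtration: env_filt n u when u is a linear combination of
   products of at most n generators. *)
Inductive env_filt : nat -> U -> Prop :=
| env_filt1 n : env_filt n 1
| env_filt_mulr n u y : env_filt n u -> env_filt n.+1 (u * i y)
| env_filtD n u v : env_filt n u -> env_filt n v -> env_filt n (u + v)
| env_filtZ n a u : env_filt n u -> env_filt n (a *: u)
| env_filtS n u : env_filt n u -> env_filt n.+1 u.

Lemma env_filt_widen n k u : env_filt n u -> env_filt (n + k) u.
Proof.
by move=> Hu; elim: k => [|k IH]; rewrite ?addn0 ?addnS //; apply: env_filtS.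
Qed.

Lemma env_filtM n k u v : env_filt n u -> env_filt k v -> env_filt (n + k) (u * v).
Proof.
move=> Hu; elim=> {k v} [k|k v y _ IH|k v w _ IHv _ IHw|k a v _ IH|k v _ IH].
- by rewrite mulr1; apply: env_filt_widen.
- by rewrite addnS mulrA; apply: env_filt_mulr.
- by rewrite mulrDr; apply: env_filtD.
- by rewrite -scalerAr; apply: env_filtZ.
- by rewrite addnS; apply: env_filtS.
Qed.

Lemma env_filt_exists u : exists n, env_filt n u.
Proof.
elim: (env_gen u) => {u} [_ [x ->]| |u v _ [n Hu] _ [k Hv]|a u _ [n Hu]|u v _ [n Hu] _ [k Hv]].
- by exists 1%N; rewrite -[i x]mul1r; apply/env_filt_mulr/env_filt1.
- by exists 0%N; apply: env_filt1.
- exists (n + k)%N; apply: env_filtD; first exact: env_filt_widen.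
  by rewrite addnC; apply: env_filt_widen.
- by exists n; apply: env_filtZ.
- by exists (n + k)%N; apply: env_filtM.
Qed.

Lemma env_star_linearr f : linear_map (star f).
Proof. exact: bilinear_linearr (env_star_bilin E) f. Qed.

(* y is primitive, so the Sweedler sum in env_star_mull has just two terms. *)
Lemma env_star_mul_gen f g y :
  star (f * g) (i y) = star f (i y) * g + f * star g (i y).
Proof.
rewrite env_star_mull.
rewrite (env_D_i y (bilinear_mul (env_star_linearr f) (env_star_linearr g))).
by rewrite !env_star_1r.
Qed.

Lemma env_filt_star_gen n g y : env_filt n g -> env_filt n (star g (i y)).
Proof.
elim=> {n g} [n|n u x Hu IH|n u v _ IHu _ IHv|n a u _ IH|n u _ IH].
- by rewrite env_star_1l env_eps_i; apply/env_filtZ/env_filt1.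
- rewrite env_star_mul_gen env_star_ext.
  by apply: env_filtD; apply: env_filt_mulr.
- by rewrite (bilinearDl (env_star_bilin E)); apply: env_filtD.
- by rewrite (bilinearZl (env_star_bilin E)); apply: env_filtZ.
- exact: env_filtS.
Qed.

End Enveloping.

Section Unitization.
Variables (K : fieldType) (V : lmodType K) (m : V -> V -> V).
Hypothesis Hm : nonunital_assoc m.

Local Notation A := (unitization Hm).
Local Notation incl := (unit_incl Hm).

Lemma unit_addE (u v : A) : u + v = ((u.1 + v.1 : K^o), u.2 + v.2).
Proof. by []. Qed.

Lemma unit_oppE (u : A) : - u = ((- u.1 : K^o), - u.2).
Proof. by []. Qed.

Lemma unit_scaleE (a : K) (u : A) : a *: u = ((a * u.1 : K^o), a *: u.2).
Proof. by []. Qed.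

Lemma unit_mulE (u v : A) :
  u * v = ((u.1 * v.1 : K^o), u.1 *: v.2 + v.1 *: u.2 + m u.2 v.2).
Proof. by []. Qed.

Lemma unit_incl_lie (L : lmodType K) (br : L -> L -> L) (phi : L -> V) :
  linear_map phi ->
  (forall x y, phi (br x y) = m (phi x) (phi y) - m (phi y) (phi x)) ->
  lie_morph br (fun x => incl (phi x)).
Proof.
move=> Hphi Hphi_br; split=> [a x y|x y].
  by rewrite /unit_incl Hphi unit_addE unit_scaleE /= mulr0 addr0.
rewrite /unit_incl !unit_mulE /= Hphi_br !scale0r !add0r.
by rewrite unit_oppE unit_addE /= mulr0 oppr0 addr0.
Qed.

Variable tr : V -> V -> V.
Hypothesis Htr : bilinear_op tr.

Local Notation tri := (unit_tri Hm tr).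

Lemma unit_tri_bilinear : bilinear_op tri.
Proof.
split=> a [x1 x2] [y1 y2] [z1 z2]; rewrite /unit_tri !unit_addE !unit_scaleE /=.
- congr pair; first by rewrite mulrDl mulrA.
  rewrite (bilinearDl Htr) (bilinearZl Htr) !scalerDr !scalerA mulrC.
  by rewrite addrACA.
- congr pair; first by rewrite mulrDr mulrCA.
  rewrite (bilinearDr Htr) (bilinearZr Htr) !scalerDl !scalerDr -scalerA.
  by rewrite addrACA.
Qed.

Lemma unit_tri1r x : tri x 1 = x.
Proof. by case: x => a v; rewrite /unit_tri /= mulr1 scale1r bilinear0r // addr0. Qed.

Lemma unit_tri1_incl v : tri 1 (incl v) = 0.
Proof.
by rewrite /unit_tri /unit_incl /= mulr0 scaler0 add0r bilinear0l.
Qed.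

Lemma unit_tri_incl u v : tri (incl u) (incl v) = incl (tr u v).
Proof. by rewrite /unit_tri /unit_incl /= mulr0 scale0r add0r. Qed.

End Unitization.

Section Representation.
Variables (K : fieldType) (L : lmodType K) (br st : L -> L -> L).
Variable E : enveloping br st.
Variables (V : lmodType K) (m : V -> V -> V) (Hm : nonunital_assoc m).
Variables (tr : V -> V -> V) (phi : L -> V).
Hypothesis Htr : bilinear_op tr.
Hypothesis Hphi_st : forall x y, phi (st x y) = tr (phi x) (phi y).

Local Notation A := (unitization Hm).
Local Notation tri := (unit_tri Hm tr).
Local Notation U := (env_U E).
Local Notation i := (env_i E).
Local Notation star := (env_star E).

Definition phi_gens (w : A) : Prop := exists v, w = unit_incl Hm (phi v).
Local Notation W := (gen_subalg phi_gens).

Hypothesis tri_mull : forall x y z : A, W x -> W y -> phi_gens z ->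
  tri (x * y) z = tri x z * y + x * tri y z.
Hypothesis tri_mulr : forall x y z : A, W x -> W y -> phi_gens z ->
  tri x (y * z) = tri (tri x y) z - tri x (tri y z).

Variable Phi : U -> A.
Hypothesis HPhi : alg_morph Phi.
Hypothesis Phi_i : forall x, Phi (i x) = unit_incl Hm (phi x).

Let PhiL : linear_map Phi. Proof. by case: HPhi. Qed.
Let Phi1 : Phi 1 = 1. Proof. by case: HPhi. Qed.
Let PhiM u v : Phi (u * v) = Phi u * Phi v. Proof. by case: HPhi. Qed.

Lemma Phi_gen u : W (Phi u).
Proof.
apply: gen_subalg_morph HPhi _ (env_gen u).
by move=> _ [x ->]; exists x; apply: Phi_i.
Qed.

Lemma Phi_gens y : phi_gens (Phi (i y)).
Proof. by exists y. Qed.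

Definition star_compat (g : U) : Prop :=
  forall f, Phi (star f g) = tri (Phi f) (Phi g).

Lemma star_compat_gen y : star_compat (i y).
Proof.
move=> f; elim: (env_gen f) => {f} [_ [x ->]| |u v _ IHu _ IHv|a u _ IHu|u v _ IHu _ IHv].
- by rewrite env_star_ext !Phi_i Hphi_st unit_tri_incl.
- rewrite env_star_1l env_eps_i scale0r (linear_map0 PhiL) Phi1 Phi_i.
  by rewrite unit_tri1_incl.
- rewrite (bilinearDl (env_star_bilin E)) !(linear_mapD PhiL) IHu IHv.
  by rewrite (bilinearDl (unit_tri_bilinear Hm Htr)).
- rewrite (bilinearZl (env_star_bilin E)) !(linear_mapZ PhiL) IHu.
  by rewrite (bilinearZl (unit_tri_bilinear Hm Htr)).
- rewrite env_star_mul_gen (linear_mapD PhiL) !PhiM IHu IHv.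
  by rewrite (tri_mull (Phi_gen u) (Phi_gen v) (Phi_gens y)).
Qed.

Lemma star_compat1 : star_compat 1.
Proof. by move=> f; rewrite env_star_1r Phi1 unit_tri1r. Qed.

Lemma star_compatD u v : star_compat u -> star_compat v -> star_compat (u + v).
Proof.
move=> Hu Hv f; rewrite (bilinearDr (env_star_bilin E)) !(linear_mapD PhiL) Hu Hv.
by rewrite (bilinearDr (unit_tri_bilinear Hm Htr)).
Qed.

Lemma star_compatZ a u : star_compat u -> star_compat (a *: u).
Proof.
move=> Hu f; rewrite (bilinearZr (env_star_bilin E)) !(linear_mapZ PhiL) Hu.
by rewrite (bilinearZr (unit_tri_bilinear Hm Htr)).
Qed.

Lemma star_compat_mul_gen u y :
  star_compat u -> star_compat (star u (i y)) -> star_compat (u * i y).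
Proof.
move=> Hu Huy f; rewrite env_star_mulr (linear_mapB PhiL) star_compat_gen Hu Huy.
by rewrite star_compat_gen PhiM (tri_mulr (Phi_gen f) (Phi_gen u) (Phi_gens y)).
Qed.

(* Induction on the bound n rather than on the derivation, since the
   derivation of star u (i y) is not a subderivation of that of u * i y. *)
Lemma star_compat_filt n k g : env_filt k g -> (k <= n)%N -> star_compat g.
Proof.
elim: n k g => [|n IHn] k g;
  elim=> {k g} [k|k u y Hu _|k u v _ IHu _ IHv|k a u _ IHu|k u _ IHu] Hk //;
  do ?[exact: star_compat1 | exact: star_compatD (IHu Hk) (IHv Hk)
      | exact: star_compatZ (IHu Hk)].
- apply: star_compat_mul_gen; first exact: IHn Hu Hk.
  exact: IHn (env_filt_star_gen y Hu) Hk.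
- exact/IHu/ltnW.
Qed.

Lemma Phi_star f g : Phi (star f g) = tri (Phi f) (Phi g).
Proof. by have [n Hn] := env_filt_exists g; exact: star_compat_filt Hn (leqnn n) f. Qed.

Lemma Phi_tri_mull f g h :
  tri (Phi f * Phi g) (Phi h) =
    sweedler (env_D E) (fun a b => tri (Phi f) (Phi a) * tri (Phi g) (Phi b)) h.
Proof.
rewrite -PhiM -Phi_star env_star_mull /sweedler (linear_map_sum PhiL).
by apply: eq_bigr => p _; rewrite PhiM !Phi_star.
Qed.

Lemma Phi_tri_assoc f g h :
  tri (tri (Phi f) (Phi g)) (Phi h) =
    tri (Phi f) (sweedler (env_D E) (fun a b => tri (Phi g) (Phi a) * Phi b) h).
Proof.
rewrite -!Phi_star env_star_assoc Phi_star /sweedler (linear_map_sum PhiL).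
by congr (tri _ _); apply: eq_bigr => p _; rewrite PhiM Phi_star.
Qed.

End Representation.

Theorem theorem3p6 (K : fieldType) (L : lmodType K) (br st : L -> L -> L)
  (Hpl : right_postLie br st) (E : enveloping br st)
  (V : lmodType K) (m : V -> V -> V) (Hm : nonunital_assoc m)
  (tr : V -> V -> V) (Htr : bilinear_op tr)
  (phi : L -> V) (Hphi : linear_map phi)
  (Hphi_br : forall x y, phi (br x y) = m (phi x) (phi y) - m (phi y) (phi x))
  (Hphi_st : forall x y, phi (st x y) = tr (phi x) (phi y))
  (Hcond : forall x y z : unitization Hm,
     gen_subalg (fun w : unitization Hm => exists v, w = unit_incl Hm (phi v)) x ->
     gen_subalg (fun w : unitization Hm => exists v, w = unit_incl Hm (phi v)) y ->
     (exists v, z = unit_incl Hm (phi v)) ->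
     unit_tri Hm tr (x * y) z = unit_tri Hm tr x z * y + x * unit_tri Hm tr y z /\
     unit_tri Hm tr x (y * z) =
       unit_tri Hm tr (unit_tri Hm tr x y) z - unit_tri Hm tr x (unit_tri Hm tr y z)) :
  exists Phi : env_U E -> unitization Hm,
    [/\ alg_morph Phi,
        (forall x, Phi (env_i E x) = unit_incl Hm (phi x)),
        (forall Psi : env_U E -> unitization Hm, alg_morph Psi ->
           (forall x, Psi (env_i E x) = unit_incl Hm (phi x)) -> forall u, Psi u = Phi u) &
        (forall f g h : env_U E,
          [/\ Phi (env_star E f g) = unit_tri Hm tr (Phi f) (Phi g),
              unit_tri Hm tr (Phi f * Phi g) (Phi h) =
                sweedler (env_D E)
                  (fun a b => unit_tri Hm tr (Phi f) (Phi a) * unit_tri Hm tr (Phi g) (Phi b)) h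
            & unit_tri Hm tr (unit_tri Hm tr (Phi f) (Phi g)) (Phi h) =
                unit_tri Hm tr (Phi f)
                  (sweedler (env_D E) (fun a b => unit_tri Hm tr (Phi g) (Phi a) * Phi b) h)])].
Proof.
have [Phi [HPhi Phi_i Phi_uniq]] := env_univ E (unit_incl_lie Hm Hphi Hphi_br).
have tri_mull x y z Wx Wy Sz := (Hcond x y z Wx Wy Sz).1.
have tri_mulr x y z Wx Wy Sz := (Hcond x y z Wx Wy Sz).2.
exists Phi; split => // f g h; split.
- exact: (Phi_star (Hm := Hm) Htr Hphi_st tri_mull tri_mulr HPhi Phi_i f g).
- exact: (Phi_tri_mull (Hm := Hm) Htr Hphi_st tri_mull tri_mulr HPhi Phi_i f g h).
- exact: (Phi_tri_assoc (Hm := Hm) Htr Hphi_st tri_mull tri_mulr HPhi Phi_i f g h).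
Qed.
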